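(* A square complex matrix $A$ is diagonalizable by *congruence (i.e. $R^*AR$ is diagonal for some nonsingular $R$) if and only if both of the following hold: (a) $A$ and $A^*$ have the same null space; (b) the *cosquare $B^{-*}B$ of the regular part $B$ of $A$ is diagonalizable and all its eigenvalues have modulus one.
   Context: The *cosquare of a nonsingular matrix $B$ is $B^{-*}B$, where $B^{-*}=(B^{-1})^*$. Every square complex matrix $A$ is *congruent to a direct sum $B\oplus J_{r_1}(0)\oplus\cdots\oplus J_{r_p}(0)$ with $B$ nonsingular and $J_r(0)$ the $r\times r$ nilpotent Jordan block; this direct sum is uniquely determined up to permutation of the singular summands and replacement of $B$ by a matrix *congruent to it. Such a $B$ is called the regular part of $A$ (its *congruence class, hence the similarity class of its *cosquare, is uniquely determined by $A$). *)

From mathcomp Require Import all_boot all_algebra.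
From mathcomp Require Import reals complex.
Set Implicit Arguments. Unset Strict Implicit. Unset Printing Implicit Defensive.
Import GRing.Theory Num.Theory.
Local Open Scope ring_scope.

Section Defs.
Variable C : numClosedFieldType.

Definition ctmx m n (A : 'M[C]_(m, n)) : 'M[C]_(n, m) := (map_mx Num.conj A)^T.

Definition cosquare k (B : 'M[C]_k) : 'M[C]_k := ctmx (invmx B) *m B.

Definition nil_jordan (r : nat) : 'M[C]_r := \matrix_(i < r, j < r) (i.+1 == j)%:R.

Fixpoint jordan_nil_sum (s : seq nat) : 'M[C]_(sumn s) :=
  match s return 'M[C]_(sumn s) with
  | [::] => 0
  | r :: s' => block_mx (nil_jordan r) 0 0 (jordan_nil_sum s')
  end.

Definition regular_part n k (A : 'M[C]_n) (B : 'M[C]_k) : Prop :=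
  B \in unitmx /\
  exists (s : seq nat) (e : k + sumn s = n) (R : 'M[C]_n),
    R \in unitmx /\
    ctmx R *m A *m R = castmx (e, e) (block_mx B 0 0 (jordan_nil_sum s)).

End Defs.

(* If S^* A S = D is diagonal and R^* A R = B (+) N exhibits a regular part B,
   then T := S^-1 R gives T^* D T = B (+) N. With G the first k columns of T,
   both D G and D^* G factor through the first k columns Z of T^-*, as
   D G = Z B and D^* G = Z B^*; hence D^* G Cq = D G for the cosquare
   Cq = B^-* B. The rows of D G span all row vectors (since G^* D G = B is
   nonsingular) and row i of D G is an eigenvector of Cq for d_i / d_i^*, so
   Cq is diagonalizable with unimodular spectrum; ker A = ker A^* is read off
   the diagonal form.
   Conversely, if ker A = ker A^*, completing a basis of the kernel splits A
   congruently as B (+) 0 with B nonsingular. If P Cq P^-1 = L is diagonal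
   with unimodular entries then L is unitary and Y := P^-* B P^-1 satisfies
   Y = Y^* L, so Y is normal and the spectral theorem diagonalizes Y, hence B
   and A, by congruence. *)
From mathcomp Require Import all_boot all_algebra.
From mathcomp Require Import reals complex.
Set Implicit Arguments. Unset Strict Implicit. Unset Printing Implicit Defensive.
Import GRing.Theory Num.Theory.
Local Open Scope ring_scope.

Section EigenRows.
Variables (F : fieldType) (m k : nat) (g : 'M[F]_k) (M : 'M[F]_(m, k)).
Variable mu : 'I_m -> F.
Hypotheses (fullM : row_full M) (eigM : forall i, row i M *m g = mu i *: row i M).

Lemma diagonalizable_eigenrows : diagonalizable g.
Proof.
apply/diagonalizablePeigen; exists (undup [seq mu i | i <- enum 'I_m]).
  exact: undup_uniq.
apply/eqmxP; rewrite submx1 (submx_trans (submx_full _ fullM)) //.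
apply/row_subP => i; rewrite (big_rem (mu i)) /=; last first.
  by rewrite mem_undup; apply: map_f; rewrite mem_enum.
by apply: submx_trans (addsmxSl _ _); apply/eigenspaceP/eigM.
Qed.

Lemma eigenvalue_eigenrows l :
  eigenvalue g l -> exists2 i, row i M != 0 & l = mu i.
Proof.
move=> eig_l; have [i /andP[nz_i /eqP ->]|no_mu] :=
  pickP (fun i => (row i M != 0) && (l == mu i)); first by exists i.
suff : ~~ eigenvalue g l by rewrite eig_l.
have sub_M : (M <= g - l%:M)%MS.
  apply/row_subP => i; have [->|nz_i] := eqVneq (row i M) 0; first exact: sub0mx.
  have nz_mu : mu i - l != 0.
    by rewrite subr_eq0 eq_sym; have := no_mu i; rewrite nz_i => /negbT.
  have row_gl : row i M *m (g - l%:M) = (mu i - l) *: row i M.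
    by rewrite mulmxBr eigM mul_mx_scalar scalerBl.
  by rewrite -[row i M](scalerK nz_mu) -row_gl scalemx_sub ?submxMl.
rewrite /eigenvalue /eigenspace negbK kermx_eq0 row_free_unit -row_full_unit.
by rewrite -sub1mx (submx_trans _ sub_M) ?sub1mx.
Qed.

End EigenRows.

Lemma row_unitmx_neq0 (F : fieldType) n (P : 'M[F]_n) i :
  P \in unitmx -> row i P != 0.
Proof.
rewrite -row_free_unit => /row_free_inj injP; rewrite rowE -(mul0mx 1 P).
by apply/eqP => /injP/matrixP/(_ 0 i); rewrite !mxE !eqxx; apply/eqP/oner_neq0.
Qed.

Section Congruence.
Variable C : numClosedFieldType.

Lemma ctmxK m n (A : 'M[C]_(m, n)) : ctmx (ctmx A) = A.
Proof. by apply/matrixP => i j; rewrite !mxE conjCK. Qed.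

Lemma ctmxM m n p (A : 'M[C]_(m, n)) (B : 'M[C]_(n, p)) :
  ctmx (A *m B) = ctmx B *m ctmx A.
Proof. by rewrite /ctmx map_mxM trmx_mul. Qed.

Lemma ctmx0 m n : ctmx (0 : 'M[C]_(m, n)) = 0.
Proof. by rewrite /ctmx map_mx0 trmx0. Qed.

Lemma ctmx1 n : ctmx (1%:M : 'M[C]_n) = 1%:M.
Proof. by rewrite /ctmx map_mx1 trmx1. Qed.

Lemma ctmx_unit n (A : 'M[C]_n) : (ctmx A \in unitmx) = (A \in unitmx).
Proof. by rewrite /ctmx unitmx_tr map_unitmx. Qed.

Lemma ctmx_block m1 m2 n1 n2 (Aul : 'M[C]_(m1, n1)) (Aur : 'M[C]_(m1, n2))
    (Adl : 'M[C]_(m2, n1)) (Adr : 'M[C]_(m2, n2)) :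
  ctmx (block_mx Aul Aur Adl Adr) =
  block_mx (ctmx Aul) (ctmx Adl) (ctmx Aur) (ctmx Adr).
Proof. by rewrite /ctmx map_block_mx tr_block_mx. Qed.

Lemma ctmx_row m n1 n2 (Al : 'M[C]_(m, n1)) (Ar : 'M[C]_(m, n2)) :
  ctmx (row_mx Al Ar) = col_mx (ctmx Al) (ctmx Ar).
Proof. by rewrite /ctmx map_row_mx tr_row_mx. Qed.

Lemma ctmx_diag n (d : 'rV[C]_n) : ctmx (diag_mx d) = diag_mx (map_mx Num.conj d).
Proof. by rewrite /ctmx map_diag_mx tr_diag_mx. Qed.

Lemma ctmx_congrM n (P Q A : 'M[C]_n) :
  ctmx (P *m Q) *m A *m (P *m Q) = ctmx Q *m (ctmx P *m A *m P) *m Q.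
Proof. by rewrite ctmxM !mulmxA. Qed.

Lemma congr_invmx n (S A D : 'M[C]_n) : S \in unitmx ->
  ctmx S *m A *m S = D -> A = ctmx (invmx S) *m D *m invmx S.
Proof. by move=> Su <-; rewrite !mulmxA -ctmxM mulmxV // ctmx1 mul1mx mulmxK. Qed.

Lemma row_diag_mul m n (d : 'rV[C]_m) (P : 'M[C]_(m, n)) i :
  row i (diag_mx d *m P) = d 0 i *: row i P.
Proof. by rewrite row_mul row_diag_mx -scalemxAl -rowE. Qed.

Lemma congr_mulmx_eq0 n (X Y Q : 'M[C]_n) (x : 'cV[C]_n) : Q \in unitmx ->
  X = ctmx Q *m Y *m Q -> (X *m x = 0 <-> Y *m (Q *m x) = 0).
Proof.
move=> Qu ->; rewrite -!mulmxA; split=> [|->]; last by rewrite mulmx0.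
move/(congr1 (mulmx (ctmx (invmx Q)))).
by rewrite mulmxA -ctmxM mulmxV ?ctmx1 ?mul1mx ?mulmx0.
Qed.

Lemma diag_mx_ker_ctmx n (d : 'rV[C]_n) (y : 'cV[C]_n) :
  diag_mx d *m y = 0 <-> ctmx (diag_mx d) *m y = 0.
Proof.
rewrite ctmx_diag !mul_diag_mx; split=> /matrixP dy; apply/matrixP => i j;
  by apply/eqP; move/eqP: (dy i j); rewrite !mxE !mulf_eq0 ?conjC_eq0.
Qed.

Lemma congr_diag_ker_ctmx n (A S : 'M[C]_n) (x : 'cV[C]_n) :
  S \in unitmx -> is_diag_mx (ctmx S *m A *m S) ->
  A *m x = 0 <-> ctmx A *m x = 0.
Proof.
move=> Su /diag_mxP [d /(congr_invmx Su) defA].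
have defA' : ctmx A = ctmx (invmx S) *m ctmx (diag_mx d) *m invmx S.
  by rewrite {1}defA !ctmxM ctmxK mulmxA.
have Siu : invmx S \in unitmx by rewrite unitmx_inv.
rewrite (congr_mulmx_eq0 _ Siu defA) (congr_mulmx_eq0 _ Siu defA').
exact: diag_mx_ker_ctmx.
Qed.

End Congruence.

Section CongruentToBlock.
Variables (C : numClosedFieldType) (k q : nat).
Variables (T X : 'M[C]_(k + q)) (B : 'M[C]_k) (N : 'M[C]_q).
Hypotheses (Tu : T \in unitmx) (congrTX : ctmx T *m X *m T = block_mx B 0 0 N).

Lemma congr_block_ulsubmx : ctmx (lsubmx T) *m X *m lsubmx T = B.
Proof.
have := congrTX; rewrite -[T in ctmx T](hsubmxK T) -[T in _ *m T](hsubmxK T).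
by rewrite ctmx_row mul_col_mx mul_col_row => /eq_block_mx [].
Qed.

Lemma congr_block_lsubmx : X *m lsubmx T = lsubmx (ctmx (invmx T)) *m B.
Proof.
have XT : X *m T = ctmx (invmx T) *m block_mx B 0 0 N.
  by rewrite (congr_invmx Tu congrTX) mulmxKV.
move/(congr1 lsubmx): XT; rewrite -[T in X *m T]hsubmxK mul_mx_row row_mxKl => ->.
by rewrite -{1}[ctmx (invmx T)]hsubmxK mul_row_block row_mxKl !mulmx0 addr0.
Qed.

End CongruentToBlock.

Section CosquareOfRegularPart.
Variables (C : numClosedFieldType) (k q : nat).
Variables (T : 'M[C]_(k + q)) (d : 'rV[C]_(k + q)) (B : 'M[C]_k) (N : 'M[C]_q).
Hypotheses (Tu : T \in unitmx) (Bu : B \in unitmx).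
Hypothesis congrTd : ctmx T *m diag_mx d *m T = block_mx B 0 0 N.

Lemma row_full_diag_lsubmx : row_full (diag_mx d *m lsubmx T).
Proof.
rewrite -col_leq_rank -{1}(mxrank_unit Bu) -(congr_block_ulsubmx congrTd).
by rewrite -mulmxA mxrankM_maxr.
Qed.

Lemma cosquare_rows_diag_lsubmx i :
  row i (diag_mx d *m lsubmx T) *m cosquare B =
  (d 0 i / (d 0 i)^*) *: row i (diag_mx d *m lsubmx T).
Proof.
have congrTd' :
    ctmx T *m ctmx (diag_mx d) *m T = block_mx (ctmx B) 0 0 (ctmx N).
  move/(congr1 (@ctmx _ _ _)): congrTd.
  by rewrite !ctmxM ctmxK mulmxA ctmx_block !ctmx0.
have key : ctmx (diag_mx d) *m lsubmx T *m cosquare B = diag_mx d *m lsubmx T.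
  rewrite (congr_block_lsubmx Tu congrTd') (congr_block_lsubmx Tu congrTd).
  rewrite /cosquare mulmxA -[_ *m ctmx B *m _]mulmxA -ctmxM.
  by rewrite mulVmx // ctmx1 mulmx1.
have /(congr1 (row i)) := key.
rewrite ctmx_diag row_mul !row_diag_mul mxE -!scalemxAl.
have [-> _|nz_di rowE] := eqVneq (d 0 i) 0; first by rewrite !scale0r scaler0.
by rewrite -rowE scalerA mulfVK ?conjC_eq0.
Qed.

End CosquareOfRegularPart.

Lemma cosquare_regular_part_of_congr_diag (C : numClosedFieldType) k q
    (A S R : 'M[C]_(k + q)) (B : 'M[C]_k) (N : 'M[C]_q) :
  S \in unitmx -> is_diag_mx (ctmx S *m A *m S) ->
  R \in unitmx -> B \in unitmx -> ctmx R *m A *m R = block_mx B 0 0 N ->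
  diagonalizable (cosquare B) /\
  (forall l, eigenvalue (cosquare B) l -> `|l| = 1).
Proof.
move=> Su /diag_mxP [d congrSd] Ru Bu congrRA.
have Tu : invmx S *m R \in unitmx by rewrite unitmx_mul unitmx_inv Su.
have congrTd :
    ctmx (invmx S *m R) *m diag_mx d *m (invmx S *m R) = block_mx B 0 0 N.
  by rewrite ctmx_congrM -(congr_invmx Su congrSd).
have fullM := row_full_diag_lsubmx Bu congrTd.
have eigM := cosquare_rows_diag_lsubmx Tu Bu congrTd.
split; first exact: diagonalizable_eigenrows fullM eigM.
move=> l /(eigenvalue_eigenrows fullM eigM) [i nz_row ->].
have nz_d : d 0 i != 0.
  by apply: contraNneq nz_row; rewrite row_diag_mul => ->; rewrite scale0r.
by rewrite normrM normfV norm_conjC divff ?normr_eq0.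
Qed.

Section NormalCongruence.
Variable C : numClosedFieldType.
Local Open Scope sesquilinear_scope.

Lemma ctmxE m n (A : 'M[C]_(m, n)) : ctmx A = A ^t*.
Proof. by rewrite /ctmx map_trmx. Qed.

Lemma normalmx_ctmx_mul_unitary n (Y L : 'M[C]_n) :
  L \is unitarymx -> Y = ctmx Y *m L -> Y \is normalmx.
Proof.
move=> /unitarymxP unitL defY; rewrite -ctmxE in unitL.
have defY' : ctmx Y = ctmx L *m Y by rewrite {1}defY ctmxM ctmxK.
apply/normalmxP; rewrite -ctmxE {1}defY {2}defY' mulmxA.
by rewrite -[_ *m L *m _]mulmxA unitL mulmx1.
Qed.

Lemma congr_diag_normalmx n (Y : 'M[C]_n) : Y \is normalmx ->
  exists U, U \in unitmx /\ is_diag_mx (ctmx U *m Y *m U).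
Proof.
move/orthomx_spectralP => defY; set P := spectralmx Y in defY.
have Pu : P \in unitmx := spectral_unit Y.
have ctP : ctmx P = invmx P by rewrite ctmxE invmx_unitary ?spectral_unitarymx.
exists (ctmx P); split; first by rewrite ctmx_unit.
by rewrite ctmxK ctP defY !mulmxA mulmxV // mul1mx mulmxK.
Qed.

Lemma congr_diag_of_cosquare k (B : 'M[C]_k) : B \in unitmx ->
  diagonalizable (cosquare B) ->
  (forall l, eigenvalue (cosquare B) l -> `|l| = 1) ->
  exists V, V \in unitmx /\ is_diag_mx (ctmx V *m B *m V).
Proof.
move=> Bu [P Pu /diagonalizable_forPex [D /(simmxRL Pu) defD]] unimod.
have PCq : P *m cosquare B = diag_mx D *m P by rewrite defD mulmxKV.
have unitD : diag_mx D \is unitarymx.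
  apply/unitarymxP; rewrite -ctmxE ctmx_diag mulmx_diag -diag_const_mx.
  congr diag_mx; apply/rowP => i; rewrite !mxE -normCK unimod ?expr1n //.
  apply/eigenvalueP; exists (row i P); last exact: row_unitmx_neq0.
  by rewrite -row_mul PCq row_diag_mul.
set Y := ctmx (invmx P) *m B *m invmx P.
have defY : Y = ctmx Y *m diag_mx D.
  rewrite defD /cosquare !ctmxM ctmxK !mulmxA mulmxKV //.
  by rewrite -[_ *m ctmx B *m _]mulmxA -ctmxM mulVmx // ctmx1 mulmx1.
have normalY := normalmx_ctmx_mul_unitary unitD defY.
have [U [Uu diagU]] := congr_diag_normalmx normalY.
exists (invmx P *m U); split; first by rewrite unitmx_mul unitmx_inv Pu.
by rewrite ctmx_congrM.
Qed.

End NormalCongruence.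

Section RegularPartFromKernel.
Variable C : numClosedFieldType.

Lemma jordan_nil_sum_nseq1 q : jordan_nil_sum C (nseq q 1%N) = 0.
Proof.
elim: q => [//|q IHq] /=; rewrite IHq.
have -> : nil_jordan C 1 = 0 by apply/matrixP => i j; rewrite !ord1 !mxE.
exact: block_mx0.
Qed.

Lemma regular_part_of_congr_block0 n k q (e : (k + q = n)%N) (A R : 'M[C]_n)
    (B : 'M[C]_k) :
  R \in unitmx -> B \in unitmx ->
  ctmx R *m A *m R = castmx (e, e) (block_mx B 0 0 (0 : 'M_q)) ->
  regular_part A B.
Proof.
move=> Ru Bu congrRA; split=> //.
have e1 : (k + sumn (nseq q 1%N) = n)%N by rewrite sumn_nseq mul1n.
exists (nseq q 1%N), e1, R; split=> //; rewrite jordan_nil_sum_nseq1 congrRA.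
move: e1; rewrite sumn_nseq mul1n => e1.
by rewrite (eq_irrelevance e1 e).
Qed.

Lemma congr_diag_of_congr_block n k q (e : (k + q = n)%N) (A R : 'M[C]_n)
    (B : 'M[C]_k) (N : 'M[C]_q) (V : 'M[C]_k) :
  R \in unitmx -> ctmx R *m A *m R = castmx (e, e) (block_mx B 0 0 N) ->
  is_diag_mx N -> V \in unitmx -> is_diag_mx (ctmx V *m B *m V) ->
  exists S, S \in unitmx /\ is_diag_mx (ctmx S *m A *m S).
Proof.
subst n; rewrite castmx_id => Ru congrRA diagN Vu diagB.
exists (R *m block_mx V 0 0 1%:M); split.
  by rewrite unitmx_mul Ru unitmxE det_ublock det1 mulr1 -unitmxE.
rewrite ctmx_congrM congrRA ctmx_block !ctmx0 ctmx1 !mulmx_block.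
rewrite !mulmx0 !mul0mx !mulmx1 !mul1mx !addr0 !add0r mul0mx.
by rewrite is_diag_block_mx // diagB diagN !eqxx.
Qed.

Lemma congr_block0_of_kernel n k q (e : (k + q = n)%N) (A : 'M[C]_n)
    (V : 'M[C]_(n, k)) (W : 'M[C]_(n, q)) :
  A *m W = 0 -> ctmx W *m A = 0 -> \rank (row_mx V W) = n -> \rank A = k ->
  exists R (B : 'M[C]_k), [/\ R \in unitmx, B \in unitmx &
    ctmx R *m A *m R = castmx (e, e) (block_mx B 0 0 (0 : 'M_q))].
Proof.
subst n => AW WA rankVW rankA.
have Ru : row_mx V W \in unitmx by rewrite -row_full_unit /row_full rankVW.
have congrVW : ctmx (row_mx V W) *m A *m row_mx V W =
               block_mx (ctmx V *m A *m V) 0 0 0.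
  rewrite ctmx_row mul_col_mx mul_col_row WA -[_ *m A *m W]mulmxA AW.
  by rewrite mulmx0 !mul0mx.
exists (row_mx V W), (ctmx V *m A *m V); split; rewrite ?castmx_id //.
rewrite -row_full_unit /row_full -(addn0 (\rank _)) -(mxrank0 C q q).
rewrite -rank_diag_block_mx -congrVW mxrankMfree ?row_free_unit //.
by rewrite eqmxMfull ?row_full_unit ?ctmx_unit // rankA.
Qed.

Lemma congr_block0_of_ker_ctmx n (A : 'M[C]_n) :
  (forall x : 'cV[C]_n, A *m x = 0 <-> ctmx A *m x = 0) ->
  exists k q (e : (k + q = n)%N) R (B : 'M[C]_k),
    [/\ R \in unitmx, B \in unitmx &
    ctmx R *m A *m R = castmx (e, e) (block_mx B 0 0 (0 : 'M_q))].
Proof.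
move=> kerA; set K := kermx A^T.
set W := (row_base K)^T; set V := (row_base K^C%MS)^T.
have AW : A *m W = 0.
  have KA : row_base K *m A^T = 0 by apply/sub_kermxP; rewrite eq_row_base.
  by rewrite -[A]trmxK -trmx_mul KA trmx0.
have WA : ctmx W *m A = 0.
  rewrite -[A]ctmxK -ctmxM -[RHS]ctmx0; congr ctmx; apply/matrixP => i j.
  have /kerA : A *m (W *m delta_mx j (0 : 'I_1)) = 0 by rewrite mulmxA AW mul0mx.
  by move/matrixP/(_ i 0); rewrite mulmxA -colE !mxE.
have rankK : \rank K = (n - \rank A)%N by rewrite mxrank_ker mxrank_tr.
have rankKc : \rank K^C%MS = \rank A.
  by rewrite mxrank_compl rankK subKn ?rank_leq_col.
have e : (\rank K^C%MS + \rank K = n)%N.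
  by rewrite rankKc rankK subnKC ?rank_leq_col.
exists (\rank K^C%MS), (\rank K), e.
apply: (congr_block0_of_kernel (V := V) e AW WA _ (esym rankKc)).
rewrite /V /W -tr_col_mx mxrank_tr -addsmxE; apply/eqP.
rewrite -/(row_full _) -sub1mx (submx_trans (_ : 1%:M <= K + K^C)%MS) //.
  by rewrite sub1mx addsmx_compl_full.
by rewrite addsmxC addsmxS // eq_row_base.
Qed.

End RegularPartFromKernel.

Theorem mainTheorem5 (R : realType) (n : nat) (A : 'M[R[i]]_n) :
  (exists S : 'M[R[i]]_n, S \in unitmx /\ is_diag_mx (ctmx S *m A *m S)) <->
  ((forall x : 'cV[R[i]]_n, A *m x = 0 <-> ctmx A *m x = 0) /\
   (forall (k : nat) (B : 'M[R[i]]_k), regular_part A B ->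
      diagonalizable (cosquare B) /\
      (forall l : R[i], eigenvalue (cosquare B) l -> `|l| = 1))).
Proof.
split=> [[S [Su diagS]] | [kerA cosquare_reg]].
  split=> [x | k B [Bu [s [e [T [Tu congrTA]]]]]].
    exact: congr_diag_ker_ctmx Su diagS.
  subst n; rewrite castmx_id in congrTA.
  exact: cosquare_regular_part_of_congr_diag Su diagS Tu Bu congrTA.
have [k [q [e [T [B [Tu Bu congrTA]]]]]] := congr_block0_of_ker_ctmx kerA.
have regB := regular_part_of_congr_block0 Tu Bu congrTA.
have [diagCq unimod] := cosquare_reg k B regB.
have [V [Vu diagV]] := congr_diag_of_cosquare Bu diagCq unimod.
exact: congr_diag_of_congr_block Tu congrTA (mx0_is_diag _ _ _) Vu diagV.
Qed.
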